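(* Let $j\geq1$, let $\lambda=(\lambda_1,\ldots,\lambda_{j-1})$ and $\mu=(\mu_{j+2},\ldots,\mu_\ell)$ be integer vectors, and let $D$ be a valid set of pairs. Assume that $\sigma^j=\sigma^{j+1}$, $(j,j+1)\notin D$, and that for each $h<j$, $(h,j)\in D$ if and only if $(h,j+1)\in D$. (a) For any integers $r$ and $s$, we have $R^D\sigma_{\lambda,r,s,\mu}=-R^D\sigma_{\lambda,s-1,r+1,\mu}$ in $\mathbb{Z}[\sigma]$. (b) For any integer $r$, we have $R^D\tau_{\lambda,r,r,\mu}=R^D\sigma_{\lambda,r,r,\mu}$ in $\mathbb{Z}[\sigma,z]$.
   Context: For each $r\geq1$, $\sigma^r=(\sigma^r_i)_{i\in\mathbb{Z}}$ is a sequence of variables with $\sigma^r_0=1$ and $\sigma^r_i=0$ for $i<0$; $\mathbb{Z}[\sigma]$ is the polynomial ring in the $\sigma^r_i$, $i,r\geq1$ (with the identification $\sigma^j=\sigma^{j+1}$ imposed by the hypothesis). For an integer sequence $\alpha$, $\sigma_\alpha:=\sigma^1_{\alpha_1}\sigma^2_{\alpha_2}\cdots$. $(\lambda,r,s,\mu)$ denotes the concatenated vector $(\lambda_1,\ldots,\lambda_{j-1},r,s,\mu_{j+2},\ldots,\mu_\ell)$. For $i<j$, $R_{ij}$ raises the $i$-th entry by 1 and lowers the $j$-th by 1; a raising operator $R$ is a monomial in the $R_{ij}$, and $R\sigma_\alpha:=\sigma_{R\alpha}$. A valid set of pairs is a finite subset $D$ of $\{(i,j)\in\mathbb{Z}^2\mid1\leq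 i<j\}$ which is an order ideal for the order $(i',j')\leq(i,j)$ iff $i'\leq i$ and $j'\leq j$. $R^D:=\prod_{1\leq i<j\leq\ell}(1-R_{ij})\prod_{(i,j)\in D}(1+R_{ij})^{-1}$, expanded as a power series and applied linearly. Let $z$ be a variable; $\tau^r:=\sigma^r$ for $r\neq j$ and $\tau^j_p:=\sigma^j_p+z\sigma^j_{p-1}$ for $p\in\mathbb{Z}$; $\tau_\alpha:=\tau^1_{\alpha_1}\tau^2_{\alpha_2}\cdots$, $R\tau_\alpha:=\tau_{R\alpha}$. *)

From HB Require Import structures.
From mathcomp Require Import all_boot all_order all_algebra.
Set Implicit Arguments. Unset Strict Implicit. Unset Printing Implicit Defensive.
Import Order.TTheory GRing.Theory Num.Theory.
Local Open Scope ring_scope.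

(* Pairs (i,j) are 1-indexed, as in the paper. *)
Definition valid_pairs (D : seq (nat * nat)) : Prop :=
  (forall p, p \in D -> (0 < p.1 < p.2)%N) /\
  (forall i j i' j', (i, j) \in D -> (0 < i' < j')%N -> (i' <= i)%N ->
      (j' <= j)%N -> (i', j') \in D).

(* Coefficient of R_p^k in the factor of R^D attached to a pair p with
   p = (i,j), i < j <= l:  (1 - R_p) if p \notin D,
   (1 - R_p) (1 + R_p)^{-1} = 1 + sum_{k>=1} 2 (-1)^k R_p^k  if p \in D. *)
Definition rcoef (inD : bool) (k : nat) : int :=
  if k == 0%N then 1
  else if inD then 2 * (-1) ^+ k
  else if k == 1%N then -1 else 0.

(* R^D s_a, where s : nat -> int -> A is the family (s^r_i) (r >= 1), and
   s_a = s^1_{a_1} s^2_{a_2} ... s^l_{a_l} with l = size a.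
   A raising operator R = prod_{i<j<=l} R_ij^(e_ij) sends a to
   R a with (R a)_k = a_k + sum_m e_km - sum_m e_mk.
   The power series is summed over exponent functions bounded by
   N := l * sum |a_k|; every term with a larger exponent has some negative
   entry in R a (the suffix sums of a are decreased by the exponents), so it
   vanishes as s^r_i = 0 for i < 0.  Positions are 0-indexed
   ordinals k : 'I_l, corresponding to the paper's position k+1. *)
Definition RD (A : comNzRingType) (D : seq (nat * nat)) (s : nat -> int -> A)
    (a : seq int) : A :=
  let l := size a in
  let N := (l * \sum_(x <- a) `|x|)%N in
  \sum_(f : {ffun 'I_l * 'I_l -> 'I_N.+1} |
          [forall p : 'I_l * 'I_l, ~~ (p.1 < p.2)%N ==> (f p == ord0)])
    ((\prod_(p : 'I_l * 'I_l)
         rcoef (((p.1 : nat).+1, (p.2 : nat).+1) \in D) (f p))%:~R *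
     \prod_(k : 'I_l)
        s (k : nat).+1 (nth 0 a k + \sum_(m : 'I_l)
                          ((f (k, m) : nat)%:Z - (f (m, k) : nat)%:Z))).

Definition tau (A : comNzRingType) (s : nat -> int -> A) (z : A) (j : nat) :
    nat -> int -> A :=
  fun r p => if r == j then s j p + z * s j (p - 1) else s r p.

From mathcomp Require Import all_boot all_order all_algebra.
From mathcomp Require Import perm ring zify.
Set Implicit Arguments. Unset Strict Implicit. Unset Printing Implicit Defensive.
Import Order.TTheory GRing.Theory Num.Theory.
Local Open Scope ring_scope.

(* Let q = (j, j+1).  As q is not in D, the factor of R^D at q is just
   1 - R_q, so R^D sigma_a = S a - S (R_q a), where S is the series with that
   factor omitted.  The symmetry of D in j, j+1 and sigma^j = sigma^(j+1)
   make S invariant under swapping the entries j and j+1 of a.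
   For (a), (s-1, r+1) is the swap of R_q (r, s), so the two differences are
   opposite.  For (b), tau^j_p = sigma^j_p + z sigma^j_(p-1) gives
   R^D tau_(r,r) = R^D sigma_(r,r) + z R^D sigma_(r-1,r), and
   R^D sigma_(r-1,r) = S (r-1, r) - S (r, r-1) = 0. *)

Lemma tperm_adjacent_ltn l (i0 i1 x y : 'I_l) : (i1 : nat) = i0.+1 ->
  (x, y) != (i0, i1) -> (x, y) != (i1, i0) ->
  (tperm i0 i1 x < tperm i0 i1 y)%N = (x < y)%N.
Proof.
move=> i1E; rewrite !xpair_eqE !permE /= -!(inj_eq val_inj) /= i1E.
by case: eqP => ?; case: eqP => ?; case: eqP => ?; case: eqP => ? /=; lia.
Qed.

Section RaisingSum.

Variables (A : comNzRingType) (D : seq (nat * nat)) (s : nat -> int -> A) (l : nat).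
Implicit Types (a b : 'I_l -> int) (e : 'I_l * 'I_l -> nat) (p q : 'I_l * 'I_l).

(* Positions are 0-indexed as in [RD]: [raised a e] is R a for
   R = prod R_km^(e (k, m)), [raise_pair q a] is R_q a, and for q not in D,
   [raising_sum_avoid B q] is the truncated series of R^D with its factor
   1 - R_q removed. *)
Definition inD p : bool := ((p.1 : nat).+1, (p.2 : nat).+1) \in D.

Definition raised a e (k : 'I_l) : int :=
  a k + \sum_(m : 'I_l) ((e (k, m))%:Z - (e (m, k))%:Z).

Definition sigma_of b : A := \prod_(k : 'I_l) s (k : nat).+1 (b k).

Definition raising_coef e : int := \prod_(p : 'I_l * 'I_l) rcoef (inD p) (e p).

Definition raising_term a e : A := (raising_coef e)%:~R * sigma_of (raised a e).

Definition raising_sum (B : nat) a : A :=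
  \sum_(f : {ffun 'I_l * 'I_l -> 'I_B.+1} |
          [forall p : 'I_l * 'I_l, ~~ (p.1 < p.2)%N ==> (f p == ord0)])
    raising_term a (fun p => f p).

Definition raising_sum_avoid (B : nat) q a : A :=
  \sum_(f : {ffun 'I_l * 'I_l -> 'I_B.+1} |
          [forall p : 'I_l * 'I_l, ~~ (p.1 < p.2)%N ==> (f p == ord0)] &&
          (f q == ord0))
    raising_term a (fun p => f p).

Definition raise_pair q a (k : 'I_l) : int :=
  a k + (k == q.1 : nat)%:Z - (k == q.2 : nat)%:Z.

Lemma eq_raising_term a e e' : e =1 e' -> raising_term a e = raising_term a e'.
Proof.
move=> eq_e; rewrite /raising_term /raising_coef /sigma_of /raised.
congr (_ * _); first by congr (_%:~R); apply: eq_bigr => p _; rewrite eq_e.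
by apply: eq_bigr => k _; congr (s _ (_ + _)); apply: eq_bigr => m _; rewrite !eq_e.
Qed.

Lemma eq_raising_term_l a b e : a =1 b -> raising_term a e = raising_term b e.
Proof.
move=> eq_ab; rewrite /raising_term /sigma_of.
by congr (_ * _); apply: eq_bigr => k _; rewrite /raised eq_ab.
Qed.

Lemma eq_raising_sum B a b : a =1 b -> raising_sum B a = raising_sum B b.
Proof. by move=> eq_ab; apply: eq_bigr => f _; apply: eq_raising_term_l. Qed.

Lemma eq_raising_sum_avoid B q a b :
  a =1 b -> raising_sum_avoid B q a = raising_sum_avoid B q b.
Proof. by move=> eq_ab; apply: eq_bigr => f _; apply: eq_raising_term_l. Qed.

Section Vanishing.

Hypothesis s_neg : forall (r : nat) (i : int), i < 0 -> s r i = 0.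

Lemma sigma_of_eq0 (P : pred 'I_l) b : \sum_(k | P k) b k < 0 -> sigma_of b = 0.
Proof.
move=> sum_neg; have /existsP [k /andP [Pk bk_neg]] : [exists k, P k && (b k < 0)].
  apply: contraTT sum_neg => /existsPn b_ge0; rewrite -leNgt.
  by apply: sumr_ge0 => k Pk; move: (b_ge0 k); rewrite Pk -leNgt.
by rewrite /sigma_of (bigD1 k) //= s_neg ?mul0r.
Qed.

Lemma sum_raised_suffix a e (k0 : 'I_l) :
  (forall p, ~~ (p.1 < p.2)%N -> e p = 0%N) ->
  \sum_(t : 'I_l | (k0 <= t)%N) raised a e t =
  \sum_(t : 'I_l | (k0 <= t)%N) a t -
  \sum_(t : 'I_l | (k0 <= t)%N) \sum_(m : 'I_l | ~~ (k0 <= m)%N) (e (m, t))%:Z.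
Proof.
move=> e_upper; rewrite /raised big_split /=; congr (_ + _).
under eq_bigr do rewrite sumrB.
rewrite sumrB.
have -> : \sum_(t : 'I_l | (k0 <= t)%N) \sum_m (e (t, m))%:Z =
          \sum_(t : 'I_l | (k0 <= t)%N) \sum_(m : 'I_l | (k0 <= m)%N) (e (t, m))%:Z.
  apply: eq_bigr => t k0t; rewrite (bigID (fun m : 'I_l => (k0 <= m)%N)) /=.
  rewrite [X in _ + X]big1 ?addr0 // => m m_lt.
  by rewrite e_upper //= -leqNgt ltnW // (leq_trans _ k0t) // ltnNge.
under [X in _ - X]eq_bigr do rewrite (bigID (fun m : 'I_l => (k0 <= m)%N)) /=.
by rewrite big_split /= [X in X - (_ + _)]exchange_big opprD addrA subrr add0r.
Qed.

Lemma raising_term_eq0 a e p :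
  (forall p, ~~ (p.1 < p.2)%N -> e p = 0%N) ->
  \sum_k `|a k| < (e p)%:Z -> raising_term a e = 0.
Proof.
case: p => i j e_upper ep_big.
have ij : (i < j)%N.
  apply: contraTT ep_big => /(e_upper (i, j)) ->; rewrite -leNgt.
  by apply: sumr_ge0 => k _; rewrite normr_ge0.
rewrite /raising_term (@sigma_of_eq0 (fun t => (j <= t)%N)) ?mulr0 //.
rewrite sum_raised_suffix // subr_lt0.
apply: (le_lt_trans _ (lt_le_trans ep_big _)).
  apply: (@le_trans _ _ (\sum_(t : 'I_l | (j <= t)%N) `|a t|)).
    by apply: ler_sum => t _; apply: ler_norm.
  rewrite [X in _ <= X](bigID (fun t : 'I_l => (j <= t)%N)) /= lerDl.
  by apply: sumr_ge0 => t _; rewrite normr_ge0.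
rewrite (bigD1 j) //= (bigD1 i) /=; last by rewrite -ltnNge.
by rewrite -addrA lerDl addr_ge0 //; do ! apply: sumr_ge0 => ? _.
Qed.

Lemma raising_sum_widen B B' a :
  \sum_k `|a k| <= B%:Z -> (B <= B')%N -> raising_sum B a = raising_sum B' a.
Proof.
move=> a_le_B le_BB'.
have le_SBB' : (B.+1 <= B'.+1)%N by [].
rewrite /raising_sum [RHS](bigID (fun f : {ffun 'I_l * 'I_l -> 'I_B'.+1} =>
                        [forall p, (f p <= B)%N])) /=.
rewrite [X in _ = _ + X]big1 ?addr0; last first.
  move=> f /andP [f_upper /forallPn [p f_big]].
  apply: (@raising_term_eq0 _ _ p).
    by move=> q q_low; move/forallP: f_upper => /(_ q); rewrite q_low => /eqP ->.
  by apply: le_lt_trans a_le_B _; rewrite ltz_nat ltnNge.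
pose widen (f : {ffun 'I_l * 'I_l -> 'I_B.+1}) : {ffun 'I_l * 'I_l -> 'I_B'.+1} :=
  [ffun p => widen_ord le_SBB' (f p)].
pose narrow (f : {ffun 'I_l * 'I_l -> 'I_B'.+1}) : {ffun 'I_l * 'I_l -> 'I_B.+1} :=
  [ffun p => inord (f p)].
rewrite [RHS](reindex_onto widen narrow) /=; last first.
  move=> f /andP [_ /forallP f_le]; apply/ffunP => p; rewrite !ffunE.
  by apply/val_inj; rewrite /= inordK // ltnS.
apply: eq_big => f; last by move=> _; apply: eq_raising_term => p; rewrite ffunE.
have -> : narrow (widen f) = f.
  by apply/ffunP => p; rewrite !ffunE; apply/val_inj; rewrite /= inordK // ltnS -ltnS.
have -> : [forall p, (widen f p <= B)%N].
  by apply/forallP => p; rewrite ffunE /= -ltnS.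
rewrite eqxx !andbT; apply: eq_forallb => p; rewrite ffunE.
by congr (_ ==> _); apply/eqP/eqP => [/(congr1 val) f0|->]; apply: val_inj.
Qed.

End Vanishing.

Lemma sum_eq_pair_l q (k : 'I_l) :
  \sum_(m : 'I_l) (((k, m) == q) : nat)%:Z = (k == q.1 : nat)%:Z.
Proof.
case: q => i j; rewrite (bigD1 j) //= big1 ?addr0 => [|m /negbTE m_neq].
  by rewrite xpair_eqE eqxx andbT.
by rewrite xpair_eqE m_neq andbF.
Qed.

Lemma sum_eq_pair_r q (k : 'I_l) :
  \sum_(m : 'I_l) (((m, k) == q) : nat)%:Z = (k == q.2 : nat)%:Z.
Proof.
case: q => i j; rewrite (bigD1 i) //= big1 ?addr0 => [|m /negbTE m_neq].
  by rewrite xpair_eqE eqxx.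
by rewrite xpair_eqE m_neq.
Qed.

Lemma raised_add_pair q a e :
  raised a (fun p => (e p + (p == q))%N) =1 raised (raise_pair q a) e.
Proof.
move=> k; rewrite /raised /raise_pair -!addrA; congr (_ + _).
rewrite -sum_eq_pair_l -sum_eq_pair_r addrA -sumrB -big_split /=.
by apply: eq_bigr => m _; rewrite !PoszD; ring.
Qed.

Lemma raising_term_add_pair q a e : ~~ inD q -> e q = 0%N ->
  raising_term a (fun p => (e p + (p == q))%N) = - raising_term (raise_pair q a) e.
Proof.
move=> q_notin_D eq0; rewrite /raising_term /sigma_of -mulNr.
congr (_ * _); last by apply: eq_bigr => k _; rewrite raised_add_pair.
rewrite /raising_coef (bigD1 q) //= [in RHS](bigD1 q) //= (negbTE q_notin_D) eq0.
rewrite eqxx mulNr !mul1r intrN; congr (- (_%:~R)).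
by apply: eq_bigr => p /negbTE ->; rewrite addn0.
Qed.

Lemma raising_sum_split B q a : (0 < B)%N -> (q.1 < q.2)%N -> ~~ inD q ->
  raising_sum B a = raising_sum_avoid B q a - raising_sum_avoid B q (raise_pair q a).
Proof.
move=> B_gt0 q_upper q_notin_D.
rewrite /raising_sum (bigID (fun f : {ffun 'I_l * 'I_l -> 'I_B.+1} => f q == ord0)) /=.
congr (_ + _).
rewrite (bigID (fun f : {ffun 'I_l * 'I_l -> 'I_B.+1} => (f q : nat) == 1%N)) /=.
rewrite [X in _ + X]big1 ?addr0; last first.
  move=> f /andP [/andP [_ fq_neq0] fq_neq1].
  rewrite /raising_term /raising_coef (bigD1 q) //= (negbTE q_notin_D).
  by move: fq_neq0 fq_neq1; case: (f q) => [[|[|k]] ?] //= _ _; rewrite !mul0r.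
pose one : 'I_B.+1 := Ordinal (B_gt0 : (1 < B.+1)%N).
pose set_q (f : {ffun 'I_l * 'I_l -> 'I_B.+1}) v : {ffun 'I_l * 'I_l -> 'I_B.+1} :=
  [ffun p => if p == q then v else f p].
rewrite /raising_sum_avoid -sumrN (reindex_onto (set_q^~ one) (set_q^~ ord0)) /=.
  apply: eq_big => f.
    have -> : (set_q (set_q f one) ord0 == f) = (f q == ord0).
      apply/eqP/eqP => [<-|fq0]; first by rewrite ffunE eqxx.
      by apply/ffunP => p; rewrite !ffunE; case: (eqVneq p q) => [->|].
    rewrite /set_q !ffunE !eqxx /= andbT.
    case: eqVneq => fq; rewrite ?andbF ?andbT //.
    apply: eq_forallb => p; rewrite ffunE.
    by case: (eqVneq p q) => [->|] //=; rewrite q_upper.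
  move=> /andP [_ /eqP set_qK].
  have fq0 : f q = ord0 by rewrite -set_qK ffunE eqxx.
  rewrite -raising_term_add_pair ?fq0 //; apply: eq_raising_term => p; rewrite ffunE.
  by case: (eqVneq p q) => [->|]; rewrite ?fq0 ?addn0.
move=> f /andP [/andP [_ fq_neq0] fq1]; apply/ffunP => p; rewrite !ffunE.
by case: (eqVneq p q) => [->|] //; apply/val_inj; rewrite /= (eqP fq1).
Qed.

Section Permutation.

Variable w : {perm 'I_l}.

Lemma raised_perm a e :
  raised (a \o w) (fun p => e (w p.1, w p.2)) =1 raised a e \o w.
Proof.
move=> k; rewrite /raised /=; congr (_ + _).
by rewrite [RHS](reindex_inj (@perm_inj _ w)).
Qed.

Lemma sigma_of_perm b : (forall (k : 'I_l) x, s (w k).+1 x = s k.+1 x) ->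
  sigma_of (b \o w) = sigma_of b.
Proof.
move=> s_w; rewrite /sigma_of [RHS](reindex_inj (@perm_inj _ w)) /=.
by apply: eq_bigr => k _; rewrite s_w.
Qed.

Lemma raising_coef_perm e :
  (forall p, e (w p.1, w p.2) != 0%N -> inD (w p.1, w p.2) = inD p) ->
  raising_coef (fun p => e (w p.1, w p.2)) = raising_coef e.
Proof.
have wp_inj : injective (fun p : 'I_l * 'I_l => (w p.1, w p.2)).
  by move=> [x y] [x' y'] [/perm_inj -> /perm_inj ->].
move=> D_w; rewrite /raising_coef [RHS](reindex_inj wp_inj) /=.
apply: eq_bigr => p _; case: (eqVneq (e (w p.1, w p.2)) 0%N) => [-> // | ep_neq0].
by rewrite D_w.
Qed.

Lemma raising_term_perm a e :
  (forall (k : 'I_l) x, s (w k).+1 x = s k.+1 x) ->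
  (forall p, e (w p.1, w p.2) != 0%N -> inD (w p.1, w p.2) = inD p) ->
  raising_term (a \o w) (fun p => e (w p.1, w p.2)) = raising_term a e.
Proof.
move=> s_w D_w; rewrite /raising_term raising_coef_perm //.
rewrite -(sigma_of_perm (raised a e) s_w).
by congr (_ * _); apply: eq_bigr => k _; rewrite (raised_perm a e k).
Qed.

End Permutation.

Section AdjacentTransposition.

Variables i0 i1 : 'I_l.
Hypothesis i1E : (i1 : nat) = i0.+1.
Let w := tperm i0 i1.
Let i01 : (i0 < i1)%N. Proof. by rewrite i1E. Qed.
Let i0_neq1 : (i0 == i1) = false. Proof. by rewrite -val_eqE ltn_eqF. Qed.
Hypothesis s_tperm : forall (k : 'I_l) x, s (w k).+1 x = s k.+1 x.
Hypothesis inD_tperm :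
  forall p, (p.1 < p.2)%N -> p != (i0, i1) -> inD (w p.1, w p.2) = inD p.

Lemma raising_sum_avoid_tperm B a :
  raising_sum_avoid B (i0, i1) (a \o w) = raising_sum_avoid B (i0, i1) a.
Proof.
pose wp (p : 'I_l * 'I_l) := (w p.1, w p.2).
have wpK : involutive wp by move=> [x y]; rewrite /wp /= !tpermK.
pose wf (f : {ffun 'I_l * 'I_l -> 'I_B.+1}) := [ffun p => f (wp p)].
have wfK : involutive wf by move=> f; apply/ffunP => p; rewrite !ffunE wpK.
pose P (f : {ffun 'I_l * 'I_l -> 'I_B.+1}) :=
  [forall p : 'I_l * 'I_l, ~~ (p.1 < p.2)%N ==> (f p == ord0)] && (f (i0, i1) == ord0).
have P_wf f : P f -> P (wf f).
  move=> /andP [/forallP f_upper fq0]; apply/andP; split; last first.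
    rewrite ffunE /wp /w tpermL tpermR.
    by move: (f_upper (i1, i0)); rewrite /= ltnNge ltnW.
  apply/forallP => [[x y]]; apply/implyP => /= yx; rewrite ffunE /wp /=.
  case: (eqVneq (x, y) (i1, i0)) => [[-> ->] | xy_neq10].
    by rewrite /w tpermL tpermR.
  case: (eqVneq (x, y) (i0, i1)) => [[ex ey] | xy_neq01].
    by rewrite ex ey i01 in yx.
  by move: (f_upper (w x, w y)); rewrite /= tperm_adjacent_ltn // yx.
have P_wfE f : P (wf f) = P f by apply/idP/idP => [/P_wf|/P_wf //]; rewrite wfK.
rewrite /raising_sum_avoid [RHS](reindex_inj (can_inj wfK)) /=.
apply: eq_big => [f | f /andP [/forallP f_upper /eqP fq0]]; first exact: esym (P_wfE f).
rewrite -(@raising_term_perm w a (fun p => wf f p) s_tperm).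
  by apply: eq_raising_term => [[x y]]; rewrite ffunE /wp /= !tpermK.
move=> [x y]; rewrite ffunE /wp /= !tpermK => fxy_neq0.
apply: (inD_tperm (p := (x, y))).
  by apply: contraNT fxy_neq0 => yx; move: (f_upper (x, y)); rewrite yx => /eqP ->.
by apply: contra_neq fxy_neq0 => ->; rewrite fq0.
Qed.

Hypothesis q_notin_D : ~~ inD (i0, i1).

Lemma raise_pair_tperm a :
  raise_pair (i0, i1) (raise_pair (i0, i1) a \o w) =1 a \o w.
Proof.
move=> k; rewrite /raise_pair /= /w.
case: (eqVneq k i0) => [-> | k_neq0]; first by rewrite tpermL ?eqxx eq_sym i0_neq1 /=; ring.
case: (eqVneq k i1) => [-> | k_neq1]; first by rewrite tpermR ?eqxx i0_neq1 /=; ring.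
by rewrite tpermD ?(eq_sym i0) ?(eq_sym i1) // (negbTE k_neq0) (negbTE k_neq1) /=; ring.
Qed.

Lemma raising_sum_tperm_raise B a : (0 < B)%N ->
  raising_sum B (raise_pair (i0, i1) a \o w) = - raising_sum B a.
Proof.
move=> B_gt0; rewrite !(@raising_sum_split _ (i0, i1)) //.
by rewrite (eq_raising_sum_avoid _ _ (raise_pair_tperm a)) !raising_sum_avoid_tperm opprB.
Qed.

Lemma raising_sum_eq0 B a : (0 < B)%N -> a i1 = a i0 + 1 -> raising_sum B a = 0.
Proof.
move=> B_gt0 a_i1; have raise_a : raise_pair (i0, i1) a =1 a \o w.
  move=> k; rewrite /raise_pair /= /w.
  case: (eqVneq k i0) => [-> | k_neq0]; first by rewrite tpermL ?eqxx i0_neq1 a_i1 /=; ring.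
  case: (eqVneq k i1) => [-> | k_neq1].
    by rewrite tpermR ?eqxx ?(eq_sym i1) ?i0_neq1 a_i1 /=; ring.
  by rewrite tpermD ?(eq_sym i0) ?(eq_sym i1) //=; ring.
rewrite (@raising_sum_split _ (i0, i1)) //.
by rewrite (eq_raising_sum_avoid _ _ raise_a) raising_sum_avoid_tperm subrr.
Qed.

End AdjacentTransposition.
End RaisingSum.

Lemma sigma_of_tau (A : comNzRingType) (s : nat -> int -> A) z l (i0 : 'I_l) b :
  sigma_of (tau s z i0.+1) b =
  sigma_of s b + z * sigma_of s (fun k => b k - (k == i0 : nat)%:Z).
Proof.
rewrite /sigma_of (bigD1 i0) // [X in X + _](bigD1 i0) // [X in _ + z * X](bigD1 i0) //=.
rewrite {1}/tau !eqxx mulrDl -mulrA; congr (_ * _ + z * (_ * _));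
  by apply: eq_bigr => k /negbTE k_neq0; rewrite /tau eqSS val_eqE k_neq0 ?subr0.
Qed.

Lemma raising_sum_tau (A : comNzRingType) D (s : nat -> int -> A) z l B (i0 : 'I_l) a :
  raising_sum D (tau s z i0.+1) B a =
  raising_sum D s B a + z * raising_sum D s B (fun k => a k - (k == i0 : nat)%:Z).
Proof.
rewrite /raising_sum mulr_sumr -big_split; apply: eq_bigr => f _ /=.
rewrite /raising_term sigma_of_tau mulrDr mulrCA; congr (_ + z * (_ * _)).
by apply: eq_bigr => k _; rewrite /raised addrAC.
Qed.

Lemma tau_eq0 (A : comNzRingType) (s : nat -> int -> A) z j :
  (forall (r : nat) (i : int), i < 0 -> s r i = 0) ->
  forall (r : nat) (i : int), i < 0 -> tau s z j r i = 0.
Proof.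
move=> s_neg r i i_neg.
have i1_neg : i - 1 < 0 by apply: lt_trans i_neg; rewrite ltrBlDr ltrDl.
by rewrite /tau !s_neg ?mulr0 ?addr0 ?if_same.
Qed.

Lemma valid_pairs_tperm D l (i0 i1 : 'I_l) :
  valid_pairs D -> (i1 : nat) = i0.+1 -> (i0.+1, i0.+2) \notin D ->
  (forall h : nat, (h < i0.+1)%N -> ((h, i0.+1) \in D) = ((h, i0.+2) \in D)) ->
  forall p : 'I_l * 'I_l, (p.1 < p.2)%N -> p != (i0, i1) ->
    inD D (tperm i0 i1 p.1, tperm i0 i1 p.2) = inD D p.
Proof.
move=> [_ D_ideal] i1E q_notin_D D_sym [x y] /= xy.
rewrite xpair_eqE negb_and -!val_eqE /inD /= !permE /= -!val_eqE /= i1E => xy_neq.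
have notin_D a b : (i0 < a)%N -> (i0.+1 < b)%N -> ((a, b) \in D) = false.
  by move=> a_gt b_gt; apply: contraNF q_notin_D => /D_ideal; apply; lia.
rewrite !(fun_if (@nat_of_ord l)) i1E; move: xy xy_neq.
have [-> | x_neq0] /= := eqVneq (x : nat) i0.
  move=> xy y_neq1; rewrite (gtn_eqF xy) (negbTE y_neq1).
  by rewrite !notin_D //; lia.
have [-> | x_neq1] /= := eqVneq (x : nat) i0.+1.
  by move=> xy _; rewrite (gtn_eqF (ltn_trans _ xy)) // (gtn_eqF xy) !notin_D //; lia.
have [-> | y_neq0] /= := eqVneq (y : nat) i0; first by move=> *; rewrite D_sym //; lia.
have [-> | y_neq1] //= := eqVneq (y : nat) i0.+1.
by move=> *; rewrite D_sym //; lia.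
Qed.

Lemma RD_raising_sum (A : comNzRingType) D (s : nat -> int -> A) (a : seq int) l :
  (forall (r : nat) (i : int), i < 0 -> s r i = 0) -> size a = l ->
  exists N, forall B, (N <= B)%N -> RD D s a = raising_sum D s B (fun k : 'I_l => nth 0 a k).
Proof.
move=> s_neg <-; exists (size a * \sum_(x <- a) `|x|)%N => B le_NB.
rewrite -(raising_sum_widen D s_neg _ le_NB) //.
have -> : \sum_(k : 'I_(size a)) `|nth 0 a k| = (\sum_(x <- a) `|x|%N)%:Z.
  rewrite (big_morph Posz PoszD (erefl _)) (big_nth 0) big_mkord.
  by apply: eq_bigr => k _; rewrite abszE.
rewrite lez_nat; case: a {le_NB} => [|x a]; [by rewrite big_nil | by rewrite leq_pmull].
Qed.

Lemma nth_cat_pair (lam mu : seq int) x y (k : nat) :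
  nth 0 (lam ++ [:: x; y] ++ mu) k =
  if k == size lam then x else if k == (size lam).+1 then y
  else nth 0 (lam ++ [:: 0; 0] ++ mu) k.
Proof.
rewrite !nth_cat; case: ltnP => [k_lt | k_ge]; first by rewrite !ltn_eqF // ltnW.
have {}k_ge : (size lam <= k)%N := k_ge.
case E: (k - size lam)%N => [|[|n]] /=.
- by rewrite [k](_ : _ = size lam) ?eqxx //; lia.
- by rewrite [k](_ : _ = (size lam).+1) ?eqxx ?gtn_eqF //; lia.
- by rewrite !gtn_eqF //; lia.
Qed.

Section PairPositions.

Variables (lam mu : seq int) (l : nat) (i0 i1 : 'I_l).
Hypotheses (i0E : (i0 : nat) = size lam) (i1E : (i1 : nat) = (size lam).+1).

Let i1_neq0 : ((size lam).+1 == size lam) = false. Proof. exact: gtn_eqF. Qed.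
Let i0_neq1 : (i0 == i1) = false. Proof. by rewrite -val_eqE /= i0E i1E ltn_eqF. Qed.

Lemma nth_pair_i0 x y : nth 0 (lam ++ [:: x; y] ++ mu) i0 = x.
Proof. by rewrite nth_cat_pair i0E eqxx. Qed.

Lemma nth_pair_i1 x y : nth 0 (lam ++ [:: x; y] ++ mu) i1 = y.
Proof. by rewrite nth_cat_pair i1E i1_neq0 eqxx. Qed.

Lemma nth_pair_tperm x y (k : 'I_l) :
  nth 0 (lam ++ [:: y; x] ++ mu) k = nth 0 (lam ++ [:: x; y] ++ mu) (tperm i0 i1 k).
Proof.
have [-> | k_neq0] := eqVneq k i0; first by rewrite tpermL nth_pair_i0 nth_pair_i1.
have [-> | k_neq1] := eqVneq k i1; first by rewrite tpermR nth_pair_i0 nth_pair_i1.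
rewrite tpermD ?(eq_sym i0) ?(eq_sym i1) //.
rewrite [LHS]nth_cat_pair [RHS]nth_cat_pair -i1E -i0E !val_eqE.
by rewrite (negbTE k_neq0) (negbTE k_neq1).
Qed.

Lemma nth_pair_raise x y (k : 'I_l) :
  nth 0 (lam ++ [:: x + 1; y - 1] ++ mu) k =
  raise_pair (i0, i1) (fun k : 'I_l => nth 0 (lam ++ [:: x; y] ++ mu) k) k.
Proof.
rewrite /raise_pair /=.
have [-> | k_neq0] := eqVneq k i0; first by rewrite !nth_pair_i0 i0_neq1 /= subr0.
have [-> | k_neq1] := eqVneq k i1; first by rewrite !nth_pair_i1 addr0.
rewrite addr0 subr0 [LHS]nth_cat_pair [RHS]nth_cat_pair -i1E -i0E !val_eqE.
by rewrite (negbTE k_neq0) (negbTE k_neq1).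
Qed.

End PairPositions.

Section AdjacentEntries.

Variables (A : comNzRingType) (sigma : nat -> int -> A) (D : seq (nat * nat)).
Variables lam mu : seq int.
Let j := (size lam).+1.
Hypothesis s_neg : forall (r : nat) (i : int), i < 0 -> sigma r i = 0.
Hypothesis s_j : forall i : int, sigma j i = sigma j.+1 i.
Hypothesis D_valid : valid_pairs D.
Hypothesis q_notin_D : (j, j.+1) \notin D.
Hypothesis D_sym : forall h : nat, (h < j)%N -> ((h, j) \in D) = ((h, j.+1) \in D).

Let l := (size lam + (size mu).+2)%N.
Let size_pair x y : size (lam ++ [:: x; y] ++ mu) = l.
Proof. by rewrite size_cat. Qed.
Let lt0 : (size lam < l)%N. Proof. by rewrite /l; lia. Qed.
Let lt1 : ((size lam).+1 < l)%N. Proof. by rewrite /l; lia. Qed.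
Let i0 : 'I_l := Ordinal lt0.
Let i1 : 'I_l := Ordinal lt1.
Let i0E : (i0 : nat) = size lam. Proof. by []. Qed.
Let i1E : (i1 : nat) = (size lam).+1. Proof. by []. Qed.
Let i1S : (i1 : nat) = i0.+1. Proof. by []. Qed.
Let s_tperm (k : 'I_l) x : sigma (tperm i0 i1 k).+1 x = sigma k.+1 x.
Proof. by case: tpermP => [-> | -> |]; rewrite ?s_j. Qed.
Let D_tperm := valid_pairs_tperm D_valid i1S q_notin_D D_sym.

Lemma RD_pair_antisym r t :
  RD D sigma (lam ++ [:: r; t] ++ mu) = - RD D sigma (lam ++ [:: t - 1; r + 1] ++ mu).
Proof.
have [N1 E1] := RD_raising_sum D s_neg (size_pair r t).
have [N2 E2] := RD_raising_sum D s_neg (size_pair (t - 1) (r + 1)).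
rewrite (E1 (N1 + N2).+1) ?(E2 (N1 + N2).+1); try lia.
rewrite -(raising_sum_tperm_raise i1S s_tperm D_tperm q_notin_D) ?opprK //.
apply: eq_raising_sum => k /=.
by rewrite -(nth_pair_raise mu i0E i1E) subrK addrK (nth_pair_tperm mu i0E i1E).
Qed.

Lemma RD_tau_diag z r :
  RD D (tau sigma z j) (lam ++ [:: r; r] ++ mu) = RD D sigma (lam ++ [:: r; r] ++ mu).
Proof.
have [N1 E1] := RD_raising_sum D (tau_eq0 z j s_neg) (size_pair r r).
have [N2 E2] := RD_raising_sum D s_neg (size_pair r r).
rewrite (E1 (N1 + N2).+1) ?(E2 (N1 + N2).+1) ?(raising_sum_tau D sigma z _ i0); try lia.
rewrite [X in _ + z * X](raising_sum_eq0 i1S s_tperm D_tperm q_notin_D) ?mulr0 ?addr0 //=.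
by rewrite (nth_pair_i0 mu i0E) (nth_pair_i1 mu i1E) eqxx -val_eqE /= gtn_eqF // subr0 subrK.
Qed.

End AdjacentEntries.

Theorem lemma6 (A : comNzRingType) (sigma : nat -> int -> A) (j : nat)
    (lam mu : seq int) (D : seq (nat * nat)) :
  (1 <= j)%N -> size lam = j.-1 -> valid_pairs D ->
  (forall r : nat, sigma r 0 = 1) ->
  (forall (r : nat) (i : int), i < 0 -> sigma r i = 0) ->
  (forall i : int, sigma j i = sigma j.+1 i) ->
  (j, j.+1) \notin D ->
  (forall h : nat, (h < j)%N -> ((h, j) \in D) = ((h, j.+1) \in D)) ->
  (forall r s : int,
     RD D sigma (lam ++ [:: r; s] ++ mu) =
     - RD D sigma (lam ++ [:: s - 1; r + 1] ++ mu)) /\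
  (forall (z : A) (r : int),
     RD D (tau sigma z j) (lam ++ [:: r; r] ++ mu) =
     RD D sigma (lam ++ [:: r; r] ++ mu)).
Proof.
move=> j_gt0 size_lam D_valid _ s_neg s_j q_notin_D D_sym.
have {j_gt0 size_lam} ? : j = (size lam).+1 by rewrite size_lam prednK.
subst j; split=> [r t | z r]; first exact: RD_pair_antisym.
exact: RD_tau_diag.
Qed.
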